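(* Let $\Gamma$ be a presheaf on $\mathbb{T}$, let $X$ be a family over $\Gamma$, let $\varphi$ be a predicate over $(\Gamma.X)\times\mathrm{Clk}$, and let $n:\Gamma\to\mathbb{N}$ be a morphism of presheaves into the constant presheaf $\mathbb{N}$. Suppose that for all $(\mathcal{E},\vartheta)$, $\gamma\in\Gamma(\mathcal{E},\vartheta)$, $x,y\in X(\mathcal{E},\vartheta,\gamma)$ and $\lambda\in\mathcal{E}$, if $\star\in\varphi(\mathcal{E},\vartheta,\gamma,x,\lambda)$ and $\star\in\varphi(\mathcal{E},\vartheta,\gamma,y,\lambda)$ then $x=y$ or $\vartheta(\lambda)<n(\gamma)$ (this is the interpretation in the model of ''$\varphi(x,\kappa)\wedge\varphi(y,\kappa)$ implies $(\triangleright^\kappa)^{n}(x=y)$''). Then for every $(\mathcal{E},\vartheta)$ and $\gamma\in\Gamma(\mathcal{E},\vartheta)$ the following are equivalent: (A) there exists $x\in X(\mathcal{E},\vartheta,\gamma)$ such that for all $\alpha<\rho$, $\star\in\varphi(\mathcal{E}\cup\{\lambda_\mathcal{E}\},\vartheta[\lambda_\mathcal{E}\mapsto\alpha],\iota\cdot\gamma,\iota\cdot x,\lambda_\mathcal{E})$; (B) for all $\alpha<\rho$ there exists $x\in X(\mathcal{E}\cup\{\lambda_\mathcal{E}\},\vartheta[\lambda_\mathcal{E}\mapsto\alpha],\iota\cdot\gamma)$ such that $\star\in\varphi(\mathcal{E}\cup\{\lambda_\mathcal{E}\},\vartheta[\lambda_\mathcal{E}\mapsto\alpha],\iota\cdo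t\gamma,x,\lambda_\mathcal{E})$.
   Context: Fix a limit ordinal $\rho$ and a countably infinite set of clock names. The category $\mathbb{T}$ has objects pairs $(\mathcal{E},\vartheta)$ with $\mathcal{E}$ a finite set of clock names and $\vartheta:\mathcal{E}\to\rho$; a morphism $(\mathcal{E},\vartheta)\to(\mathcal{E}',\vartheta')$ is a function $\sigma:\mathcal{E}\to\mathcal{E}'$ with $\vartheta'\circ\sigma\le\vartheta$ pointwise. A presheaf on $\mathbb{T}$ is a covariant functor $\mathbb{T}\to\mathsf{Set}$; write $\sigma\cdot x$ for the action of $\sigma$. $\mathrm{Clk}$ is the presheaf $\mathrm{Clk}(\mathcal{E},\vartheta)=\mathcal{E}$ with $\sigma\cdot\lambda=\sigma(\lambda)$. For a presheaf $\Gamma$, $\int\Gamma$ is its category of elements, with objects $(\mathcal{E},\vartheta,\gamma)$; a presheaf $X$ over $\int\Gamma$ is a covariant functor $\int\Gamma\to\mathsf{Set}$ with fibres $X(\mathcal{E},\vartheta,\gamma)$ and maps $\sigma\cdot(-)$. $X$ is invariant under clock introduction if for all $(\mathcal{E},\vartheta)$, $\gamma$, clock names $\lambda\notin\mathcal{E}$ and $\alpha<\rho$, the map $\iota\cdot(-): X(\mathcal{E},\vartheta,\gamma)\to X(\mathcal{E}\cup\{\lambda\},\vartheta[\lambda\mapsto\alpha],\iota\cdot\gamma)$ induced by the inclusion $\iota:\mathcal{E}\to\mathcal{E}\cup\{\lambda\}$ is a bijection. A family over $\Gamma$ is a presheaf over $\int\Gamma$ invariant under clock introduction; a predicate is a family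 all of whose fibres are subsets of $\{\star\}$. The comprehension $\Gamma.X$ is the presheaf $(\Gamma.X)(\mathcal{E},\vartheta)=\{(\gamma,x)\mid\gamma\in\Gamma(\mathcal{E},\vartheta), x\in X(\mathcal{E},\vartheta,\gamma)\}$; thus a predicate $\varphi$ over $(\Gamma.X)\times\mathrm{Clk}$ has fibres $\varphi(\mathcal{E},\vartheta,\gamma,x,\lambda)\subseteq\{\star\}$ for $\lambda\in\mathcal{E}$. A function assigning to each finite set $\mathcal{E}$ of clock names a clock name $\lambda_\mathcal{E}\notin\mathcal{E}$ is fixed, and $\iota$ denotes the inclusion $\mathcal{E}\to\mathcal{E}\cup\{\lambda_\mathcal{E}\}$, viewed as a morphism $(\mathcal{E},\vartheta)\to(\mathcal{E}\cup\{\lambda_\mathcal{E}\},\vartheta[\lambda_\mathcal{E}\mapsto\alpha])$. *)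

From HB Require Import structures.
From mathcomp Require Import all_boot all_order.
From mathcomp Require Import finmap.

Set Implicit Arguments.
Unset Strict Implicit.
Unset Printing Implicit Defensive.

Import Order.TTheory.
Local Open Scope order_scope.
Local Open Scope fset_scope.

(* Clock names are natural numbers (a countably infinite set).
   The limit ordinal rho is represented by an arbitrary well-ordered type O
   (the set of ordinals < rho), nonempty and without maximum. *)

Section Model.
Context {disp : Order.disp_t} (O : orderType disp).

Record Obj := mkObj { oE : {fset nat}; oth : oE -> O }.
Arguments oth : clear implicits.

Definition Hom (a b : Obj) :=
  {s : oE a -> oE b | forall c, oth b (s c) <= oth a c}.

Definition homf (a b : Obj) (f : Hom a b) : oE a -> oE b := proj1_sig f.

Definition idH (a : Obj) : Hom a a :=
  exist (fun s : oE a -> oE a => forall c, oth a (s c) <= oth a c)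
    (fun c => c) (fun c => lexx (oth a c)).

Definition compH (a b c : Obj) (g : Hom b c) (f : Hom a b) : Hom a c :=
  exist (fun s : oE a -> oE c => forall x, oth c (s x) <= oth a x)
    (fun x => homf g (homf f x))
    (fun x => le_trans (proj2_sig g (homf f x)) (proj2_sig f x)).

Record Presheaf := {
  ps_ob :> Obj -> Type;
  ps_act : forall a b, Hom a b -> ps_ob a -> ps_ob b;
  ps_id : forall a x, ps_act (idH a) x = x;
  ps_comp : forall a b c (f : Hom a b) (g : Hom b c) x,
      ps_act (compH g f) x = ps_act g (ps_act f x) }.
#[global] Arguments ps_act p {a b} f x.
#[global] Arguments ps_id p {a} x.
#[global] Arguments ps_comp p {a b c} f g x.

(* Presheaves over the category of elements of G *)
Record PresheafOver (G : Presheaf) := {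
  po_ob :> forall a, G a -> Type;
  po_act : forall a b (f : Hom a b) (g : G a), po_ob g -> po_ob (ps_act G f g);
  po_id : forall a (g : G a) (x : po_ob g),
      eq_rect _ (@po_ob a) (po_act (idH a) x) g (ps_id G g) = x;
  po_comp : forall a b c (f : Hom a b) (h : Hom b c) (g : G a) (x : po_ob g),
      eq_rect _ (@po_ob c) (po_act (compH h f) x) _ (ps_comp G f h g)
      = po_act h (po_act f x) }.
#[global] Arguments po_ob {G} p a g.
#[global] Arguments po_act {G} p {a b} f {g} x.

Lemma memU_l (E : {fset nat}) (l : nat) (e : E) : fsval e \in E `|` [fset l].
Proof. by rewrite in_fsetU (fsvalP e). Qed.

Lemma memU_r (E : {fset nat}) (l : nat) : l \in E `|` [fset l].
Proof. by rewrite in_fsetU in_fset1 eqxx orbT. Qed.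

Definition ext_th (a : Obj) (l : nat) (al : O) (c : oE a `|` [fset l]) : O :=
  match (insub (fsval c) : option (oE a)) with
  | Some e => oth a e
  | None => al
  end.
Arguments ext_th : clear implicits.


Definition ext_obj (a : Obj) (l : nat) (al : O) : Obj :=
  @mkObj (oE a `|` [fset l]) (ext_th a l al).
Arguments ext_obj : clear implicits.

Definition clk_intro_fun (a : Obj) (l : nat) (e : oE a) : oE a `|` [fset l] :=
  [` memU_l l e].
Arguments clk_intro_fun : clear implicits.


Lemma clk_intro_le (a : Obj) (l : nat) (al : O) (e : oE a) :
  ext_th a l al (clk_intro_fun a l e) <= oth a e.
Proof. by rewrite /ext_th /clk_intro_fun /= valK. Qed.

Definition clk_intro (a : Obj) (l : nat) (al : O) : Hom a (ext_obj a l al) :=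
  exist (fun s : oE a -> oE (ext_obj a l al) =>
           forall c, oth (ext_obj a l al) (s c) <= oth a c)
    (clk_intro_fun a l) (@clk_intro_le a l al).
Arguments clk_intro : clear implicits.

Definition newclk (a : Obj) (l : nat) (al : O) : oE (ext_obj a l al) :=
  [` memU_r (oE a) l].
Arguments newclk : clear implicits.

Definition is_family (G : Presheaf) (X : PresheafOver G) : Prop :=
  forall (a : Obj) (g : G a) (l : nat) (al : O), l \notin oE a ->
    bijective (@po_act G X a (ext_obj a l al) (clk_intro a l al) g).

(* A predicate over (G.X) x Clk: a family over (G.X) x Clk all of whose fibres
   are subsets of {*}; "* in phi(E,theta,g,x,c)" is rendered as the Prop
   [pr_ob phi g x c]. Functoriality becomes monotonicity along morphisms and
   invariance under clock introduction (bijectivity of a map between subsets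
   of {*}) becomes an equivalence. *)
Record PredCX (G : Presheaf) (X : PresheafOver G) := {
  pr_ob :> forall a (g : G a), X a g -> oE a -> Prop;
  pr_act : forall a b (f : Hom a b) (g : G a) (x : X a g) (c : oE a),
      pr_ob x c -> pr_ob (po_act X f x) (homf f c);
  pr_inv : forall a (g : G a) (x : X a g) (c : oE a) (l : nat) (al : O),
      l \notin oE a ->
      (pr_ob x c <-> pr_ob (po_act X (clk_intro a l al) x) (homf (clk_intro a l al) c)) }.
#[global] Arguments pr_ob {G X} p a g x c.

(* For an ordinal al (< rho) and a natural number n, al < n (as ordinals)
   iff al has fewer than n predecessors. *)
Definition ord_lt_nat (al : O) (n : nat) : Prop :=
  ~ exists s : seq O, [/\ size s = n, uniq s & all (fun b => b < al) s].

End Model.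

#[global] Arguments oth {disp O} o _.
#[global] Arguments ext_th {disp O} a l al c.
#[global] Arguments ext_obj {disp O} a l al.
#[global] Arguments clk_intro_fun {disp O} a l e.
#[global] Arguments clk_intro {disp O} a l al.
#[global] Arguments newclk {disp O} a l al.

From HB Require Import structures.
From mathcomp Require Import all_boot all_order.
From mathcomp Require Import finmap.
Local Open Scope order_scope.
Local Open Scope fset_scope.

From Stdlib Require Import ProofIrrelevance.
Set Implicit Arguments.
Import Order.TTheory.

(* By invariance under clock introduction, every witness of (B) at time [al]
   is the image of a unique [y] over [(E, theta)], and lowering the time of the
   new clock from [be] to [al <= be] is a morphism, so [phi] is antitone in the
   time.  Fix [al0] with at least [n g] predecessors: at [al0] the hypothesis
   makes witnesses unique.  For any [al], the witness at [max al al0] lowers to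
   both [al] and [al0], so by uniqueness at [al0] it comes from the same [y0] as
   the witness at [al0]; hence [y0] satisfies (A). *)

Section ClockIntroduction.
Context {disp : Order.disp_t} {O : orderType disp}.

Lemma Hom_ext (a b : Obj O) (f h : Hom a b) : homf f = homf h -> f = h.
Proof.
case: f h => [f pf] [h ph] /= ef; subst h.
by rewrite (proof_irrelevance _ pf ph).
Qed.

Lemma oth_newclk (a : Obj O) (l : nat) (al : O) :
  l \notin oE a -> oth (ext_obj a l al) (newclk a l al) = al.
Proof. by move=> nl; rewrite /= /ext_th insubN. Qed.

Definition clk_lower (a : Obj O) (l : nat) {al be : O} (le_al_be : al <= be) :
  Hom (ext_obj a l be) (ext_obj a l al).
Proof.
refine (exist _ (fun c => c) _) => c /=.
by rewrite /ext_th; case: insub.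
Defined.

Lemma clk_lower_intro (a : Obj O) (l : nat) (al be : O) (le_al_be : al <= be) :
  compH (clk_lower a l le_al_be) (clk_intro a l be) = clk_intro a l al.
Proof. exact: Hom_ext. Qed.

Lemma pr_act_comp (G : Presheaf O) (X : PresheafOver G) (phi : PredCX X)
    (a b c : Obj O) (f : Hom a b) (h : Hom b c) (g : G a) (x : X a g) (k : oE c) :
  phi c _ (po_act X h (po_act X f x)) k -> phi c _ (po_act X (compH h f) x) k.
Proof. by rewrite -po_comp; case: _ / ps_comp. Qed.

Lemma pr_clk_intro_antitone {G : Presheaf O} {X : PresheafOver G}
    (phi : PredCX X) {a : Obj O} {g : G a} {y : X a g} {l : nat} {al be : O} :
  al <= be ->
  phi _ _ (po_act X (clk_intro a l be) y) (newclk a l be) ->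
  phi _ _ (po_act X (clk_intro a l al) y) (newclk a l al).
Proof.
move=> le_al_be /(pr_act (clk_lower a l le_al_be)) /pr_act_comp.
by rewrite clk_lower_intro.
Qed.

Lemma ord_ge_nat_exists :
  inhabited O -> (forall al : O, exists be, al < be) ->
  forall m : nat, exists al : O, ~ ord_lt_nat al m.
Proof.
move=> [x0] O_lim m; suff [al [s [sz us below]]] :
  exists al : O, exists s : seq O, [/\ size s = m, uniq s & all (fun b => b < al) s].
  by exists al; apply; exists s.
elim: m => [|m [al [s [sz us below]]]]; first by exists x0, [::].
have [be lt_al_be] := O_lim al.
exists be, (al :: s); split => /=; first by rewrite sz.
  by rewrite us andbT; apply/negP => /(allP below); rewrite ltxx.
rewrite lt_al_be; apply/allP => b /(allP below) lt_b_al.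
exact: lt_trans lt_b_al lt_al_be.
Qed.

End ClockIntroduction.

Unset Implicit Arguments.
Theorem mainTheorem6 (disp : Order.disp_t) (O : orderType disp)
  (O_wf : well_founded (fun x y : O => x < y))
  (O_inh : inhabited O)
  (O_lim : forall al : O, exists be : O, al < be)
  (fresh : {fset nat} -> nat) (fresh_notin : forall E, fresh E \notin E)
  (G : Presheaf O) (X : PresheafOver G) (X_fam : is_family X)
  (phi : PredCX X)
  (n : forall a : Obj O, G a -> nat)
  (n_nat : forall (a b : Obj O) (f : Hom a b) (g : G a), n b (ps_act G f g) = n a g)
  (H : forall (a : Obj O) (g : G a) (x y : X a g) (c : oE a),
      phi a g x c -> phi a g y c -> x = y \/ ord_lt_nat (oth a c) (n a g))
  (a : Obj O) (g : G a) :
  (exists x : X a g, forall al : O,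
      phi (ext_obj a (fresh (oE a)) al)
          (ps_act G (clk_intro a (fresh (oE a)) al) g)
          (po_act X (clk_intro a (fresh (oE a)) al) x)
          (newclk a (fresh (oE a)) al))
  <->
  (forall al : O, exists x : X (ext_obj a (fresh (oE a)) al)
                               (ps_act G (clk_intro a (fresh (oE a)) al) g),
      phi (ext_obj a (fresh (oE a)) al)
          (ps_act G (clk_intro a (fresh (oE a)) al) g)
          x
          (newclk a (fresh (oE a)) al)).
Proof.
set l := fresh (oE a); have nl : l \notin oE a := fresh_notin _.
split=> [[x Px] al|HB]; first by exists (po_act X (clk_intro a l al) x).
have witness al : exists y : X a g, phi _ _ (po_act X (clk_intro a l al) y) (newclk a l al).
  have [x Px] := HB al; have [unintro _ introK] := X_fam a g l al nl.
  by exists (unintro x); rewrite introK.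
have [al0 many_below] := ord_ge_nat_exists O_inh O_lim (n a g).
have [y0 P0] := witness al0; exists y0 => al.
have [yb Pb] := witness (Order.max al al0).
have le_al0 : al0 <= Order.max al al0 by rewrite le_max lexx orbT.
have le_al : al <= Order.max al al0 by rewrite le_max lexx.
have Pb0 := pr_clk_intro_antitone phi le_al0 Pb.
have [eq_intro|] := H _ _ _ _ _ Pb0 P0; last by rewrite oth_newclk // n_nat.
rewrite -(bij_inj (X_fam a g l al0 nl) eq_intro).
exact: (pr_clk_intro_antitone phi le_al Pb).
Qed.
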